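(* Let $\kappa$ be an infinite cardinal and assume $\clubsuit^{\Diamond}_{\kappa^+}$. Then there exists a sequence $(B_\delta\mid\delta\in\lim(\kappa^+))$ such that for every limit ordinal $\delta<\kappa^+$, $B_\delta\subseteq\delta$ is a club (closed unbounded) subset of $\delta$, and for every club $C\subseteq\kappa^+$ there is a club $D\subseteq C$ of $\kappa^+$ such that the set $\{\delta\in\lim(\kappa^+)\mid D\cap\delta=B_\delta\}$ is stationary in $\kappa^+$.
   Context: $\lim(\kappa^+)$ denotes the set of limit ordinals below $\kappa^+$. For a regular uncountable cardinal $\lambda$, a superclub sequence for $\lambda$ is a sequence $(S_\alpha\mid\alpha<\lambda)$ with $S_\alpha\subseteq\alpha$ for each $\alpha$, such that for every $A\in[\lambda]^\lambda$ there is $B\in[A]^\lambda$ for which $\{\alpha<\lambda\mid B\cap\alpha=S_\alpha\}$ is stationary in $\lambda$. $\clubsuit^{\Diamond}_\lambda$ (superclub at $\lambda$) is the statement that a superclub sequence for $\lambda$ exists. (Since prediction happens on a stationary set, one may index a superclub sequence by limit ordinals only.) *)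

(* Ordinals below kappa^+ are modelled as the elements of an
   abstract well-ordered type (L, lt) whose order type is kappa^+, where the
   cardinal kappa is the cardinality of an infinite type K. *)
From Stdlib Require Import List.

Definition well_order {L : Type} (lt : L -> L -> Prop) : Prop :=
  (forall x, ~ lt x x) /\
  (forall x y z, lt x y -> lt y z -> lt x z) /\
  (forall x y, lt x y \/ x = y \/ lt y x) /\
  well_founded lt.

Definition infinite_type (K : Type) : Prop :=
  ~ exists l : list K, forall x : K, In x l.

Definition injective {A B : Type} (f : A -> B) : Prop :=
  forall x y, f x = f y -> x = y.

(* The order type of (L, lt) is |K|^+ : every proper initial segment has
   cardinality <= |K|, while L itself has cardinality > |K|. *)
Definition is_successor_of {L : Type} (lt : L -> L -> Prop) (K : Type) : Prop :=
  (forall a : L, exists f : {x : L | lt x a} -> K, injective f) /\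
  ~ (exists f : L -> K, injective f).

Section Ord.
Context {L : Type} (lt : L -> L -> Prop).

Definition is_limit (d : L) : Prop :=
  (exists x, lt x d) /\ (forall x, lt x d -> exists y, lt x y /\ lt y d).

Definition cofinal_below (S : L -> Prop) (g : L) : Prop :=
  forall x, lt x g -> exists y, S y /\ lt x y /\ lt y g.

Definition club_in (d : L) (S : L -> Prop) : Prop :=
  (forall x, S x -> lt x d) /\
  cofinal_below S d /\
  (forall g, lt g d -> is_limit g -> cofinal_below S g -> S g).

Definition club (S : L -> Prop) : Prop :=
  (forall x, exists y, S y /\ lt x y) /\
  (forall g, is_limit g -> cofinal_below S g -> S g).

Definition stationary (S : L -> Prop) : Prop :=
  forall C, club C -> exists x, C x /\ S x.

Definition full_size (A : L -> Prop) : Prop :=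
  exists f : L -> {x : L | A x}, injective f.

Definition trace_eq (B : L -> Prop) (a : L) (S : L -> Prop) : Prop :=
  forall x, (B x /\ lt x a) <-> S x.

Definition superclub_seq (S : L -> L -> Prop) : Prop :=
  (forall a x, S a x -> lt x a) /\
  forall A : L -> Prop, full_size A ->
    exists B : L -> Prop, (forall x, B x -> A x) /\ full_size B /\
      stationary (fun a => trace_eq B a (S a)).

Definition superclub : Prop := exists S, superclub_seq S.
End Ord.

(* Let B_d be the closure of the superclub guess S_d inside d (all of d when S_d
   is not cofinal in d).  Given a club C, which has full size since kappa^+ is
   regular, the superclub property gives B included in C of full size whose
   initial segments are guessed on a stationary set.  Its closure D is a club
   inside C, and at every guessed d that is a limit point of B we get
   D n d = closure of (B n d) = closure of S_d = B_d.  The limit points of B form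
   a club, so these d are stationary.  Regularity of kappa^+ rests on
   kappa * kappa = kappa, obtained from Hessenberg's well-ordering of pairs. *)

From Stdlib Require Import Classical ClassicalEpsilon FunctionalExtensionality PropExtensionality ProofIrrelevance List Lia Wellfounded Relations.

Definition card_le (A B : Type) : Prop := exists f : A -> B, injective f.

Definition finite_type (T : Type) : Prop := exists l : list T, forall x, In x l.

Lemma card_le_refl (A : Type) : card_le A A.
Proof. exists (fun x => x). intros x y H; exact H. Qed.

Lemma card_le_trans (A B C : Type) : card_le A B -> card_le B C -> card_le A C.
Proof. intros [f Hf] [g Hg]. exists (fun x => g (f x)). intros x y H. apply Hf, Hg, H. Qed.

Lemma card_le_prod (A B C D : Type) : card_le A C -> card_le B D -> card_le (A * B) (C * D).
Proof.
  intros [f Hf] [g Hg]. exists (fun p => (f (fst p), g (snd p))).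
  intros [a b] [c d] H. injection H as H1 H2. apply Hf in H1. apply Hg in H2. subst; reflexivity.
Qed.

Lemma card_le_option (A B : Type) : card_le A B -> card_le (option A) (option B).
Proof.
  intros [f Hf]. exists (option_map f).
  intros [a|] [b|] H; try discriminate; [|reflexivity]. injection H as H. f_equal. exact (Hf _ _ H).
Qed.

Lemma proj1_sig_inj (A : Type) (P : A -> Prop) : injective (@proj1_sig A P).
Proof. intros [x hx] [y hy]. simpl. intros ->. f_equal. apply proof_irrelevance. Qed.

Lemma card_le_subset (A : Type) (P Q : A -> Prop) :
  (forall x, P x -> Q x) -> card_le {x | P x} {x | Q x}.
Proof.
  intros HPQ. exists (fun x => exist Q (proj1_sig x) (HPQ _ (proj2_sig x))).
  intros x y E. apply proj1_sig_inj. exact (f_equal (@proj1_sig _ _) E).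
Qed.

Lemma card_le_image (A B : Type) (f : A -> B) : card_le {y | exists a, f a = y} A.
Proof.
  exists (fun y => proj1_sig (constructive_indefinite_description (fun a => f a = proj1_sig y) (proj2_sig y))).
  intros [y hy] [y' hy'] E. apply proj1_sig_inj; simpl in *.
  destruct (constructive_indefinite_description _ hy) as [a <-].
  destruct (constructive_indefinite_description _ hy') as [a' <-]. simpl in E. congruence.
Qed.

Lemma finite_option (T : Type) : finite_type T -> finite_type (option T).
Proof.
  intros [l Hl]. exists (None :: map Some l).
  intros [t|]; [right; apply in_map, Hl | left; reflexivity].
Qed.

Lemma finite_prod (A B : Type) : finite_type A -> finite_type B -> finite_type (A * B).
Proof. intros [l Hl] [m Hm]. exists (list_prod l m). intros [a b]. apply in_prod; auto. Qed.

Lemma nat_not_le_finite (T : Type) : card_le nat T -> ~ finite_type T.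
Proof.
  intros [f Hf] [l Hl].
  assert (Hdup : NoDup (map f (seq 0 (S (length l))))).
  { apply NoDup_map_NoDup_ForallPairs; [intros x y _ _ H; exact (Hf _ _ H) | apply seq_NoDup]. }
  pose proof (NoDup_incl_length Hdup (fun x _ => Hl x)) as Hle.
  rewrite length_map, length_seq in Hle. lia.
Qed.

Fixpoint fresh_list (T : Type) (i : inhabited T) (n : nat) : list T :=
  match n with
  | 0 => nil
  | S n => epsilon i (fun t => ~ In t (fresh_list T i n)) :: fresh_list T i n
  end.

Lemma infinite_nat_le (T : Type) : infinite_type T -> card_le nat T.
Proof.
  intros HT.
  assert (i : inhabited T).
  { apply NNPP. intros Hi. apply HT. exists nil. intros x. exact (Hi (inhabits x)). }
  pose (g := fun n => epsilon i (fun t => ~ In t (fresh_list T i n))).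
  assert (Hfresh : forall n, ~ In (g n) (fresh_list T i n)).
  { intros n. apply epsilon_spec. apply NNPP. intros H. apply HT. exists (fresh_list T i n).
    intros x. apply NNPP. intros Hx. exact (H (ex_intro _ x Hx)). }
  assert (Hin : forall m n, m < n -> In (g m) (fresh_list T i n)).
  { intros m n; induction n as [|n IH]; intros H; [lia|].
    destruct (PeanoNat.Nat.eq_dec m n) as [->|Hmn]; [left; reflexivity | right; apply IH; lia]. }
  exists g. intros m n H.
  destruct (PeanoNat.Nat.lt_total m n) as [h|[h|h]]; [|exact h|].
  - exfalso. apply (Hfresh n). rewrite <- H. exact (Hin _ _ h).
  - exfalso. apply (Hfresh m). rewrite H. exact (Hin _ _ h).
Qed.

(* Hilbert's hotel: [f n] moves to [f (S n)], freeing [f 0] for [None]. *)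
Definition hotel_shift {T : Type} (f : nat -> T) (t : T) : T :=
  match excluded_middle_informative (exists n, f n = t) with
  | left H => f (S (proj1_sig (constructive_indefinite_description _ H)))
  | right _ => t
  end.

Lemma hotel_shift_spec {T : Type} (f : nat -> T) (t : T) :
  (exists n, f n = t /\ hotel_shift f t = f (S n)) \/
  ((~ exists n, f n = t) /\ hotel_shift f t = t).
Proof.
  unfold hotel_shift. destruct (excluded_middle_informative _) as [H|H]; [left|right; auto].
  destruct (constructive_indefinite_description _ H) as [n Hn]. exists n; auto.
Qed.

Lemma card_le_option_absorb (T : Type) : card_le nat T -> card_le (option T) T.
Proof.
  intros [f Hf].
  exists (fun o => match o with None => f 0 | Some t => hotel_shift f t end).
  intros [a|] [b|] H.
  - f_equal.
    destruct (hotel_shift_spec f a) as [[n [Hn Ha]]|[Hn Ha]];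
    destruct (hotel_shift_spec f b) as [[m [Hm Hb]]|[Hm Hb]]; rewrite Ha, Hb in H.
    + apply Hf in H. injection H as ->. congruence.
    + exfalso. apply Hm. exists (S n). exact H.
    + exfalso. apply Hn. exists (S m). symmetry; exact H.
    + exact H.
  - destruct (hotel_shift_spec f a) as [[n [Hn Ha]]|[Hn Ha]]; rewrite Ha in H.
    + apply Hf in H. discriminate.
    + exfalso. apply Hn. exists 0. symmetry; exact H.
  - destruct (hotel_shift_spec f b) as [[n [Hn Hb]]|[Hn Hb]]; rewrite Hb in H.
    + apply Hf in H. discriminate.
    + exfalso. apply Hn. exists 0. exact H.
  - reflexivity.
Qed.

Section Comparison.
Variables (T Y : Type) (R : T -> T -> Prop).
Hypotheses (R_wf : well_founded R) (R_total : forall s t, R s t \/ s = t \/ R t s).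
Hypothesis Y_inh : inhabited Y.

Definition fresh_step (t : T) (f : forall s, R s t -> Y) : Y :=
  epsilon Y_inh (fun y => forall s (r : R s t), f s r <> y).

Definition fresh_rec : T -> Y := Fix R_wf (fun _ => Y) fresh_step.

Lemma fresh_rec_eq (t : T) :
  fresh_rec t = epsilon Y_inh (fun y => forall s, R s t -> fresh_rec s <> y).
Proof.
  unfold fresh_rec at 1. rewrite Fix_eq; [reflexivity|].
  intros x f g H. unfold fresh_step. f_equal. apply functional_extensionality; intros y.
  apply propositional_extensionality. split; intros H1 s r; [rewrite <- H | rewrite H]; apply H1.
Qed.

(* [fresh_rec] picks at each [t] a value not taken below [t]: either it never
   runs out, giving an injection, or at some [t] every value is taken below [t]. *)
Lemma card_le_or_segment : card_le T Y \/ exists t, card_le Y {s | R s t}.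
Proof.
  destruct (classic (forall t, exists y, forall s, R s t -> fresh_rec s <> y)) as [H|H].
  - left. exists fresh_rec.
    assert (Hfresh : forall s t, R s t -> fresh_rec s <> fresh_rec t).
    { intros s t r. rewrite (fresh_rec_eq t). exact (epsilon_spec Y_inh _ (H t) s r). }
    intros s t E. destruct (R_total s t) as [h|[h|h]]; [| exact h |].
    + exfalso. exact (Hfresh s t h E).
    + exfalso. exact (Hfresh t s h (eq_sym E)).
  - right. apply not_all_ex_not in H as [t Ht]. exists t.
    assert (Hcover : forall y, exists s, R s t /\ fresh_rec s = y).
    { intros y. apply NNPP; intros C. apply Ht. exists y. intros s r E. apply C. exists s; auto. }
    apply choice in Hcover as [g Hg].
    exists (fun y => exist (fun s => R s t) (g y) (proj1 (Hg y))).
    intros y y' E. apply (f_equal (@proj1_sig _ _)) in E. simpl in E.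
    rewrite <- (proj2 (Hg y)), <- (proj2 (Hg y')), E. reflexivity.
Qed.

End Comparison.

Lemma wf_minimal (A : Type) (R : A -> A -> Prop) (P : A -> Prop) :
  well_founded R -> (exists x, P x) -> exists m, P m /\ forall y, R y m -> ~ P y.
Proof.
  intros wf [x Hx]. induction (wf x) as [x _ IH].
  destruct (classic (exists y, R y x /\ P y)) as [[y [Hy1 Hy2]]|H].
  - exact (IH y Hy1 Hy2).
  - exists x. split; [exact Hx|]. intros y r Py. apply H; eauto.
Qed.

Lemma slexprod_total (A B : Type) (RA : A -> A -> Prop) (RB : B -> B -> Prop) :
  (forall x y, RA x y \/ x = y \/ RA y x) -> (forall x y, RB x y \/ x = y \/ RB y x) ->
  forall p q, slexprod A B RA RB p q \/ p = q \/ slexprod A B RA RB q p.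
Proof.
  intros HA HB [a b] [a' b'].
  destruct (HA a a') as [h|[<-|h]]; [left; now constructor | | right; right; now constructor].
  destruct (HB b b') as [h|[<-|h]]; [left | right; left; reflexivity | right; right];
    now apply right_slex.
Qed.

Section WellOrder.
Context {L : Type} (lt : L -> L -> Prop).
Hypothesis Hwo : well_order lt.

Let lt_irrefl : forall x, ~ lt x x := proj1 Hwo.
Let lt_trans : forall x y z, lt x y -> lt y z -> lt x z := proj1 (proj2 Hwo).
Let lt_total : forall x y, lt x y \/ x = y \/ lt y x := proj1 (proj2 (proj2 Hwo)).
Let lt_wf : well_founded lt := proj2 (proj2 (proj2 Hwo)).

Definition segment (a : L) : Type := {y | lt y a}.

Definition unbounded (X : L -> Prop) : Prop := forall x, exists y, X y /\ lt x y.

Definition closure (S : L -> Prop) (x : L) : Prop :=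
  S x \/ (is_limit lt x /\ cofinal_below lt S x).

(* The whole of [d] when [S] is not cofinal in [d], so that it is club in every limit [d]. *)
Definition closure_in (S : L -> Prop) (d x : L) : Prop :=
  lt x d /\ (cofinal_below lt S d -> closure S x).

Definition max2 (x y : L) : L := if excluded_middle_informative (lt x y) then y else x.

Lemma not_lt_antisym x y : ~ lt x y -> ~ lt y x -> x = y.
Proof. intros Hxy Hyx. destruct (lt_total x y) as [h|[h|h]]; tauto. Qed.

Lemma not_lt_trans x y z : ~ lt y x -> ~ lt z y -> ~ lt z x.
Proof.
  intros Hyx Hzy Hzx. destruct (lt_total x y) as [h|[<-|h]].
  - exact (Hzy (lt_trans _ _ _ Hzx h)).
  - exact (Hzy Hzx).
  - exact (Hyx h).
Qed.

Lemma max2_ge_l x y : ~ lt (max2 x y) x.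
Proof.
  unfold max2. destruct (excluded_middle_informative (lt x y)) as [h|h]; [|apply lt_irrefl].
  intros h'. exact (lt_irrefl _ (lt_trans _ _ _ h h')).
Qed.

Lemma max2_ge_r x y : ~ lt (max2 x y) y.
Proof. unfold max2. destruct (excluded_middle_informative (lt x y)); [apply lt_irrefl | assumption]. Qed.

Lemma max2_lt x y a : lt x a -> lt y a -> lt (max2 x y) a.
Proof. unfold max2. destruct (excluded_middle_informative (lt x y)); auto. Qed.

Lemma closed_segment_le_option (m : L) : card_le {z | ~ lt m z} (option (segment m)).
Proof.
  exists (fun z => match excluded_middle_informative (lt (proj1_sig z) m) with
                   | left h => Some (exist _ (proj1_sig z) h)
                   | right _ => None
                   end).
  intros [z hz] [z' hz'] E. apply proj1_sig_inj. simpl in *.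
  destruct (excluded_middle_informative (lt z m)) as [h|h];
  destruct (excluded_middle_informative (lt z' m)) as [h'|h']; try discriminate.
  - injection E as E. exact E.
  - rewrite (not_lt_antisym _ _ h hz), (not_lt_antisym _ _ h' hz'). reflexivity.
Qed.

Definition maxlex_key (p : L * L) : L * (L * L) := (max2 (fst p) (snd p), p).

Definition maxlex (p q : L * L) : Prop :=
  slexprod L (L * L) lt (slexprod L L lt lt) (maxlex_key p) (maxlex_key q).

Lemma maxlex_wf : well_founded maxlex.
Proof.
  apply (wf_inverse_image _ _ _ maxlex_key).
  apply wf_slexprod; [|apply wf_slexprod]; exact lt_wf.
Qed.

Lemma maxlex_total p q : maxlex p q \/ p = q \/ maxlex q p.
Proof.
  destruct (slexprod_total _ _ _ _ lt_total (slexprod_total _ _ _ _ lt_total lt_total)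
              (maxlex_key p) (maxlex_key q)) as [h|[h|h]]; auto.
  right; left. exact (f_equal snd h).
Qed.

Lemma maxlex_bounded p q :
  maxlex q p -> ~ lt (max2 (fst p) (snd p)) (fst q) /\ ~ lt (max2 (fst p) (snd p)) (snd q).
Proof.
  intros H.
  assert (Hm : ~ lt (max2 (fst p) (snd p)) (max2 (fst q) (snd q))).
  { intros h. unfold maxlex, maxlex_key in H.
    inversion H as [x x' y y' h' | x y y' h']; subst.
    - exact (lt_irrefl _ (lt_trans _ _ _ h h')).
    - match goal with E : max2 _ _ = max2 _ _ |- _ => rewrite E in h end.
      exact (lt_irrefl _ h). }
  split; eapply not_lt_trans; [apply max2_ge_l | exact Hm | apply max2_ge_r | exact Hm].
Qed.

Definition pair_val {a : L} (s : segment a * segment a) : L * L :=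
  (proj1_sig (fst s), proj1_sig (snd s)).

Lemma pair_val_inj (a : L) : injective (@pair_val a).
Proof.
  intros [x y] [x' y'] E. unfold pair_val in E; simpl in E. injection E as Ex Ey.
  apply proj1_sig_inj in Ex, Ey. subst. reflexivity.
Qed.

Lemma maxlex_segment_le (a : L) (p : segment a * segment a) :
  card_le {s : segment a * segment a | maxlex (pair_val s) (pair_val p)}
          ({z | ~ lt (max2 (fst (pair_val p)) (snd (pair_val p))) z} *
           {z | ~ lt (max2 (fst (pair_val p)) (snd (pair_val p))) z}).
Proof.
  pose (M := max2 (fst (pair_val p)) (snd (pair_val p))).
  exists (fun s =>
    let Hs := maxlex_bounded (pair_val p) (pair_val (proj1_sig s)) (proj2_sig s) in
    (exist (fun z => ~ lt M z) _ (proj1 Hs), exist (fun z => ~ lt M z) _ (proj2 Hs))).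
  intros s s' E. injection E as Ex Ey. apply proj1_sig_inj, pair_val_inj.
  exact (f_equal2 pair Ex Ey).
Qed.

(* Hessenberg: below a pair [p] in [maxlex] there are only pairs drawn from the
   closed segment of [max2 p], which lies below [a], so the induction hypothesis applies. *)
Lemma segment_square_le (a : L) :
  card_le nat (segment a) -> card_le (segment a * segment a) (segment a).
Proof.
  induction (lt_wf a) as [a _ IH]. intros Hn.
  pose (R := fun s t : segment a * segment a => maxlex (pair_val s) (pair_val t)).
  assert (R_wf : well_founded R) by exact (wf_inverse_image _ _ _ _ maxlex_wf).
  assert (R_total : forall s t, R s t \/ s = t \/ R t s).
  { intros s t. destruct (maxlex_total (pair_val s) (pair_val t)) as [h|[h|h]]; auto.
    right; left. exact (pair_val_inj a _ _ h). }
  assert (W_inh : inhabited (segment a)) by (destruct Hn as [f _]; exact (inhabits (f 0))).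
  destruct (card_le_or_segment _ _ R R_wf R_total W_inh) as [H|[p Hp]]; [exact H|].
  set (m := max2 (fst (pair_val p)) (snd (pair_val p))).
  assert (hm : lt m a) by exact (max2_lt _ _ _ (proj2_sig (fst p)) (proj2_sig (snd p))).
  assert (Ha : card_le (segment a) (option (segment m) * option (segment m))).
  { eapply card_le_trans; [exact Hp|]. eapply card_le_trans; [exact (maxlex_segment_le a p)|].
    apply card_le_prod; apply closed_segment_le_option. }
  destruct (classic (finite_type (segment m))) as [Hfin|Hinf].
  - exfalso. apply (nat_not_le_finite _ (card_le_trans _ _ _ Hn Ha)).
    apply finite_prod; apply finite_option; exact Hfin.
  - pose proof (infinite_nat_le _ Hinf) as Hm.
    assert (Ham : card_le (segment a) (segment m)).
    { eapply card_le_trans; [exact Ha|]. eapply card_le_trans; [|exact (IH m hm Hm)].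
      apply card_le_prod; apply card_le_option_absorb, Hm. }
    eapply card_le_trans; [exact (card_le_prod _ _ _ _ Ham Ham)|].
    eapply card_le_trans; [exact (IH m hm Hm)|].
    exact (card_le_subset L (fun y => lt y m) (fun y => lt y a) (fun y hy => lt_trans _ _ _ hy hm)).
Qed.

Lemma cofinal_below_mono (S T : L -> Prop) (g : L) :
  (forall x, S x -> T x) -> cofinal_below lt S g -> cofinal_below lt T g.
Proof. intros HST H x hx. destruct (H x hx) as [y [Sy hy]]. exists y; auto. Qed.

Lemma cofinal_below_closure (S : L -> Prop) (g : L) :
  cofinal_below lt (closure S) g -> cofinal_below lt S g.
Proof.
  intros H x hx. destruct (H x hx) as [y [[Sy|[_ Cy]] [hxy hyg]]]; [exists y; auto|].
  destruct (Cy x hxy) as [z [Sz [hxz hzy]]]. exists z. split; [exact Sz|]. split; eauto.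
Qed.

Lemma closure_sub (S C : L -> Prop) :
  (forall x, S x -> C x) -> (forall g, is_limit lt g -> cofinal_below lt C g -> C g) ->
  forall x, closure S x -> C x.
Proof.
  intros HSC C_closed x [Sx|[Lx Cx]]; [exact (HSC x Sx)|].
  exact (C_closed x Lx (cofinal_below_mono _ _ _ HSC Cx)).
Qed.

Lemma closure_club (S : L -> Prop) : unbounded S -> club lt (closure S).
Proof.
  intros HS. split.
  - intros x. destruct (HS x) as [y [Sy hy]]. exists y. split; [left|]; assumption.
  - intros g Lg Cg. right. split; [exact Lg|]. exact (cofinal_below_closure _ _ Cg).
Qed.

Lemma closure_in_club_in (S : L -> Prop) (d : L) : is_limit lt d -> club_in lt d (closure_in S d).
Proof.
  intros [_ Ld]. split; [|split].
  - intros x [hx _]. exact hx.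
  - intros x hx. destruct (classic (cofinal_below lt S d)) as [Hc|Hc].
    + destruct (Hc x hx) as [y [Sy [hxy hyd]]]. exists y. split; [|auto].
      split; [exact hyd|]. intros _. left; exact Sy.
    + destruct (Ld x hx) as [y [hxy hyd]]. exists y. split; [|auto]. split; [exact hyd|]. intros Hc'; contradiction.
  - intros g hg Lg Cg. split; [exact hg|]. intros Hc. right. split; [exact Lg|].
    apply cofinal_below_closure. apply (cofinal_below_mono (closure_in S d)); [|exact Cg].
    intros x [_ Hx]. exact (Hx Hc).
Qed.

Lemma trace_eq_closure_in (B T : L -> Prop) (d : L) :
  trace_eq lt B d T -> cofinal_below lt B d ->
  trace_eq lt (closure B) d (closure_in T d).
Proof.
  intros HT HB.
  assert (Hcof : forall g, lt g d -> cofinal_below lt B g <-> cofinal_below lt T g).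
  { intros g hg. split; intros H x hx; destruct (H x hx) as [y [Hy [hxy hyg]]];
      exists y; (split; [|auto]); apply HT; [split; eauto | exact Hy]. }
  assert (HTd : cofinal_below lt T d).
  { intros x hx. destruct (HB x hx) as [y [By [hxy hyd]]]. exists y. split; [apply HT|]; auto. }
  intros x. split.
  - intros [[Bx|[Lx Cx]] hx]; (split; [exact hx|]); intros _; [left | right].
    + apply HT; auto.
    + split; [exact Lx|]. apply Hcof; assumption.
  - intros [hx Hx]. split; [|exact hx]. destruct (Hx HTd) as [Tx|[Lx Cx]]; [left | right].
    + apply HT, Tx.
    + split; [exact Lx|]. apply Hcof; assumption.
Qed.

Section Successor.
Variable K : Type.
Hypotheses (HK : infinite_type K) (Hsucc : is_successor_of lt K).

(* [K] embeds into some proper initial segment of [L], which is equinumerous with its square. *)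
Lemma card_le_square : card_le (K * K) K.
Proof.
  destruct Hsucc as [Hseg HL].
  pose proof (infinite_nat_le K HK) as HnK.
  assert (K_inh : inhabited K) by (destruct HnK as [f _]; exact (inhabits (f 0))).
  destruct (card_le_or_segment L K lt lt_wf lt_total K_inh) as [H|[t Ht]]; [contradiction|].
  pose proof (segment_square_le t (card_le_trans _ _ _ HnK Ht)) as Hsq.
  eapply card_le_trans; [exact (card_le_prod _ _ _ _ Ht Ht)|].
  eapply card_le_trans; [exact Hsq | exact (Hseg t)].
Qed.

Lemma closed_segment_le (a : L) : card_le {y | ~ lt a y} K.
Proof.
  eapply card_le_trans; [apply closed_segment_le_option|].
  eapply card_le_trans; [apply card_le_option, (proj1 Hsucc a)|].
  exact (card_le_option_absorb K (infinite_nat_le K HK)).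
Qed.

Lemma segment_embeddings :
  exists i : L -> L -> K, forall c w w', lt w c -> lt w' c -> i c w = i c w' -> w = w'.
Proof.
  destruct (infinite_nat_le K HK) as [f _].
  exists (fun c w => match excluded_middle_informative (lt w c) with
     | left h => proj1_sig (constructive_indefinite_description _ (proj1 Hsucc c)) (exist _ w h)
     | right _ => f 0
     end).
  intros c w w' hw hw'.
  destruct (constructive_indefinite_description _ (proj1 Hsucc c)) as [g Hg]. simpl.
  destruct (excluded_middle_informative (lt w c)) as [h|h]; [|contradiction].
  destruct (excluded_middle_informative (lt w' c)) as [h'|h']; [|contradiction].
  intros E. exact (f_equal (@proj1_sig _ _) (Hg _ _ E)).
Qed.

(* Regularity: [L] is the union of the segments below the points of [X], so if
   [X] had size at most [K] then [L] would inject into [X * K], hence into [K]. *)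
Lemma unbounded_full_size (X : L -> Prop) : unbounded X -> full_size X.
Proof.
  intros HX. destruct Hsucc as [Hseg HL].
  destruct (classic (inhabited L)) as [[l]|nL].
  2:{ exists (fun x => False_rect _ (nL (inhabits x))). intros x. exfalso. exact (nL (inhabits x)). }
  assert (X_inh : inhabited {x | X x}).
  { destruct (HX l) as [y [Xy _]]. exact (inhabits (exist _ y Xy)). }
  destruct (card_le_or_segment L _ lt lt_wf lt_total X_inh) as [H|[t Ht]]; [exact H|].
  exfalso. apply HL.
  destruct segment_embeddings as [i Hi].
  apply choice in HX as [c Hc].
  assert (HLX : card_le L ({x | X x} * K)).
  { exists (fun w => (exist X (c w) (proj1 (Hc w)), i (c w) w)).
    intros w w' E. injection E as Ec Ei. rewrite <- Ec in Ei.
    exact (Hi (c w) w w' (proj2 (Hc w)) (eq_ind_r (lt w') (proj2 (Hc w')) Ec) Ei). }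
  eapply card_le_trans; [exact HLX|]. eapply card_le_trans; [|exact card_le_square].
  exact (card_le_prod _ _ _ _ (card_le_trans _ _ _ Ht (Hseg t)) (card_le_refl K)).
Qed.

Lemma full_size_unbounded (A : L -> Prop) : full_size A -> unbounded A.
Proof.
  intros HA x. apply NNPP. intros Hx. apply (proj2 Hsucc).
  eapply card_le_trans; [exact HA|]. eapply card_le_trans; [|exact (closed_segment_le x)].
  apply card_le_subset. intros y Ay hxy. exact (Hx (ex_intro _ y (conj Ay hxy))).
Qed.

Lemma nat_seq_bounded (s : nat -> L) : exists u, forall n, lt (s n) u.
Proof.
  apply NNPP. intros H. apply (proj2 Hsucc).
  assert (Hrange : unbounded (fun y => exists n, s n = y)).
  { intros x. destruct (full_size_unbounded (fun _ => True)) with (x := x) as [y [_ hxy]].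
    { exists (fun y => exist _ y I). intros u v E. exact (f_equal (@proj1_sig _ _) E). }
    assert (exists n, ~ lt (s n) y) as [n hn].
    { apply NNPP. intros C. apply H. exists y. intros n. apply NNPP. intros D. apply C. eauto. }
    exists (s n). split; [eauto|]. destruct (lt_total (s n) y) as [h|[<-|h]]; eauto; contradiction. }
  eapply card_le_trans; [exact (unbounded_full_size _ Hrange)|].
  eapply card_le_trans; [exact (card_le_image _ _ s)|]. exact (infinite_nat_le K HK).
Qed.

Lemma nat_seq_sup (s : nat -> L) :
  exists d, (forall n, lt (s n) d) /\ forall y, lt y d -> exists n, ~ lt (s n) y.
Proof.
  destruct (wf_minimal _ lt _ lt_wf (nat_seq_bounded s)) as [d [Hd Hmin]].
  exists d. split; [exact Hd|]. intros y hy. apply NNPP. intros H.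
  apply (Hmin y hy). intros n. apply NNPP. intros D. apply H. eauto.
Qed.

(* The sequence [a] climbs alternately into [E] and [U]; its supremum works. *)
Lemma unbounded_common_limit (E U : L -> Prop) : unbounded E -> unbounded U ->
  forall x, exists d, lt x d /\ is_limit lt d /\ cofinal_below lt E d /\ cofinal_below lt U d.
Proof.
  intros HE HU x. apply choice in HE as [e He]. apply choice in HU as [b Hb].
  pose (a := fun n => nat_rect (fun _ => L) x (fun _ z => b (e z)) n).
  assert (a_lt_e : forall n, lt (a n) (e (a n))) by (intros n; apply He).
  assert (e_lt_a : forall n, lt (e (a n)) (a (S n))) by (intros n; apply Hb).
  destruct (nat_seq_sup a) as [d [Hd Hsup]].
  assert (Hstep : forall y, lt y d -> exists n, lt y (e (a n)) /\ lt (e (a n)) d).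
  { intros y hy. destruct (Hsup y hy) as [n hn]. exists n.
    assert (lt y (e (a n))) by (destruct (lt_total y (a n)) as [h|[->|h]]; eauto; contradiction).
    split; eauto. }
  exists d. split; [exact (Hd 0)|]. split; [split; [exists x; exact (Hd 0)|] | split].
  - intros y hy. destruct (Hstep y hy) as [n [h h']]. exists (e (a n)); auto.
  - intros y hy. destruct (Hstep y hy) as [n [h h']]. exists (e (a n)). split; [apply He | auto].
  - intros y hy. destruct (Hstep y hy) as [n [h h']]. exists (a (S n)).
    split; [apply Hb|]. split; eauto.
Qed.

Lemma club_limit_points (E U : L -> Prop) : club lt E -> unbounded U ->
  club lt (fun d => E d /\ is_limit lt d /\ cofinal_below lt U d).
Proof.
  intros [HE E_closed] HU. split.
  - intros x. destruct (unbounded_common_limit E U HE HU x) as [d [hxd [Ld [CEd CUd]]]].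
    exists d. split; [|exact hxd]. split; [exact (E_closed d Ld CEd)|]. auto.
  - intros g Lg Cg. split; [|split; [exact Lg|]].
    + apply (E_closed g Lg). apply (cofinal_below_mono _ _ _ (fun y Hy => proj1 Hy) Cg).
    + apply cofinal_below_closure. apply (cofinal_below_mono _ _ _ (fun y Hy => or_intror (proj2 Hy)) Cg).
Qed.

End Successor.
End WellOrder.

Theorem lemma2p1 (K : Type) (L : Type) (lt : L -> L -> Prop)
  (HK : infinite_type K) (Hwo : well_order lt) (Hsucc : is_successor_of lt K)
  (Hclub : superclub lt) :
  exists B : L -> L -> Prop,
    (forall d, is_limit lt d -> club_in lt d (B d)) /\
    (forall C : L -> Prop, club lt C ->
       exists D : L -> Prop, (forall x, D x -> C x) /\ club lt D /\
         stationary lt (fun d => is_limit lt d /\ trace_eq lt D d (B d))).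
Proof.
  destruct Hclub as [S [_ HS]].
  exists (fun d => closure_in lt (S d) d). split.
  { intros d Hd. exact (closure_in_club_in lt Hwo (S d) d Hd). }
  intros C [C_unb C_closed].
  destruct (HS C (unbounded_full_size lt Hwo K HK Hsucc C C_unb)) as [B [HBC [HB_full HB_pred]]].
  pose proof (full_size_unbounded lt Hwo K HK Hsucc B HB_full) as HB_unb.
  exists (closure lt B). split; [|split].
  - exact (closure_sub lt B C HBC C_closed).
  - exact (closure_club lt Hwo B HB_unb).
  - intros E HE.
    destruct (HB_pred _ (club_limit_points lt Hwo K HK Hsucc E B HE HB_unb))
      as [d [[Ed [Ld Bd]] HTd]].
    exists d. split; [exact Ed|]. split; [exact Ld|].
    exact (trace_eq_closure_in lt Hwo B (S d) d HTd Bd).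
Qed.
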